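(* Let $L:(0,\infty)\to(0,\infty)$ be slowly varying at $\infty$, let $\beta>0$, let $b_1,b_2,b_3$ be fixed positive constants with $b_2>b_3$, and let $A_{k_n}=e^{2\beta(n-1)}L(e^{2n-2})$. Then for any fixed $x_0>0$ with $x_0\ne e^{2\beta(r+1-b_1)}$ for all $r\in\mathbb{Z}$, there are only finitely many integers $n$ for which there exists a positive integer $m$ with \[ m-b_1+\frac{1}{2\beta}\log L(e^{2m-b_2})\le\frac{1}{2\beta}\log(A_{k_n}x_0)<m-b_1+\frac{1}{2\beta}\log L(e^{2m-b_3}). \] *)

From Stdlib Require Export Reals Lra ZArith.
Open Scope R_scope.

(* L : (0,oo) -> (0,oo), modelled as a total function R -> R that is
   positive on (0,oo); only its values on (0,oo) matter. *)
Definition positive_on_pos (L : R -> R) : Prop :=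
  forall x : R, 0 < x -> 0 < L x.

Definition slowly_varying (L : R -> R) : Prop :=
  positive_on_pos L /\
  forall lam : R, 0 < lam ->
    forall eps : R, 0 < eps ->
      exists M : R, forall x : R, M < x ->
        Rabs (L (lam * x) / L x - 1) < eps.

Definition A_kn (beta : R) (L : R -> R) (n : nat) : R :=
  exp (2 * beta * (INR n - 1)) * L (exp (2 * INR n - 2)).

From Stdlib Require Import Reals ZArith Lra Lia.
Open Scope R_scope.

(* Put G(t) = ln L(e^t) / (2 beta) and y = ln x0 / (2 beta) + b1 - 1, so that the
   middle term of the inequalities is n + y - b1 + G(2n - 2).  Slow variation
   makes G(t + s) - G(t) tend to 0 for every fixed s, so G moves by o(1) per step
   along 2n - 2 and the bounds G(2m - b2), G(2m - b3) are o(1) away from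
   G(2m - 2).  An admissible pair (n, m) with m large therefore puts the
   non-integer y within o(1) (1 + |m - n|) of the integer m - n, which is
   impossible once the o(1) is small compared with the distance of y to Z;
   while for the finitely many small m the right-hand side stays bounded and
   the middle term grows like n / 2. *)

Lemma slowly_varying_ln_shift (L : R -> R) (s eta : R) :
  slowly_varying L -> 0 < eta ->
  exists T, forall t, T < t -> Rabs (ln (L (exp (t + s))) - ln (L (exp t))) < eta.
Proof.
  intros [Hpos HL] Heta.
  assert (Hlo : exp (- eta) < 1) by (rewrite <- exp_0; apply exp_increasing; lra).
  assert (Hhi : 1 < exp eta) by (rewrite <- exp_0; apply exp_increasing; lra).
  set (eps := Rmin (1 - exp (- eta)) (exp eta - 1)).
  assert (Heps : 0 < eps) by (unfold eps; apply Rmin_case; lra).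
  destruct (HL (exp s) (exp_pos s) eps Heps) as [M HM].
  exists (Rabs M); intros t Ht.
  assert (HMt : M < exp t) by (pose proof (exp_ineq1_le t); pose proof (Rle_abs M); lra).
  specialize (HM _ HMt); rewrite Rmult_comm, <- exp_plus in HM.
  set (a := L (exp (t + s))) in *; set (b := L (exp t)) in *.
  assert (Ha : 0 < a) by apply Hpos, exp_pos.
  assert (Hb : 0 < b) by apply Hpos, exp_pos.
  assert (Hab : 0 < a / b) by (apply Rdiv_lt_0_compat; auto).
  replace (ln a - ln b) with (ln (a / b))
    by (unfold Rdiv; rewrite ln_mult, ln_Rinv; auto using Rinv_0_lt_compat).
  assert (eps <= 1 - exp (- eta)) by apply Rmin_l.
  assert (eps <= exp eta - 1) by apply Rmin_r.
  apply Rabs_def2 in HM; destruct HM as [HM1 HM2].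
  assert (Hup : ln (a / b) < ln (exp eta)) by (apply ln_increasing; lra).
  assert (Hdown : ln (exp (- eta)) < ln (a / b)) by (apply ln_increasing; [apply exp_pos | lra]).
  rewrite ln_exp in Hup, Hdown; apply Rabs_def1; lra.
Qed.

Lemma cv_infty_affine_INR (a b : R) : 0 < a -> cv_infty (fun k => a * INR k + b).
Proof.
  intros Ha M.
  destruct (INR_archimed a (Rabs (M - b)) Ha) as [N HN].
  exists N; intros k Hk.
  assert (HNk : INR N <= INR k) by (apply le_INR; lia).
  pose proof (Rle_abs (M - b)).
  assert (a * INR N <= a * INR k) by (apply Rmult_le_compat_l; lra).
  lra.
Qed.

Lemma slowly_varying_ln_shift_cv (L : R -> R) (c s : R) (u : nat -> R) :
  slowly_varying L -> cv_infty u ->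
  Un_cv (fun k => c * ln (L (exp (u k + s))) - c * ln (L (exp (u k)))) 0.
Proof.
  intros HL Hu eps Heps.
  assert (Hc : 0 < Rabs c + 1) by (pose proof (Rabs_pos c); lra).
  set (e := eps / (Rabs c + 1)).
  assert (He : 0 < e) by (apply Rdiv_lt_0_compat; lra).
  assert (Hce : (Rabs c + 1) * e = eps) by (unfold e; field; lra).
  destruct (slowly_varying_ln_shift L s e HL He) as [T HT].
  destruct (Hu T) as [N HN].
  exists N; intros k Hk.
  unfold R_dist; rewrite Rminus_0_r, <- Rmult_minus_distr_l, Rabs_mult.
  specialize (HT _ (HN k Hk)).
  apply Rle_lt_trans with (Rabs c * e).
  - apply Rmult_le_compat_l; [apply Rabs_pos | lra].
  - lra.
Qed.

Lemma slowly_varying_ln_even_shift_cv (L : R -> R) (c a : R) :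
  slowly_varying L ->
  Un_cv (fun k => c * ln (L (exp (2 * INR k - a))) - c * ln (L (exp (2 * INR k - 2)))) 0.
Proof.
  intros HL.
  assert (Hu : cv_infty (fun k => 2 * INR k + -2)) by (apply cv_infty_affine_INR; lra).
  apply Un_cv_ext with (2 := slowly_varying_ln_shift_cv L c (2 - a) _ HL Hu).
  intro k; replace (2 * INR k + -2 + (2 - a)) with (2 * INR k - a) by ring.
  replace (2 * INR k + -2) with (2 * INR k - 2) by ring; reflexivity.
Qed.

Lemma Un_cv_0_eventually (u : nat -> R) (eta : R) :
  Un_cv u 0 -> 0 < eta -> exists K, forall k, (K <= k)%nat -> Rabs (u k) < eta.
Proof.
  intros Hu Heta; destruct (Hu eta Heta) as [K HK].
  exists K; intros k Hk; specialize (HK k Hk).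
  unfold R_dist in HK; rewrite Rminus_0_r in HK; exact HK.
Qed.

Lemma Rabs_le_between (x a : R) : Rabs x <= a -> - a <= x <= a.
Proof.
  intros H; pose proof (Rle_abs x); pose proof (Rle_abs (- x)).
  rewrite Rabs_Ropp in *; lra.
Qed.

Lemma noninteger_dist_Z_pos (y : R) :
  (forall z : Z, y <> IZR z) -> exists d, 0 < d /\ forall z : Z, d <= Rabs (y - IZR z).
Proof.
  intros Hy.
  set (f := Zfloor y); destruct (Zfloor_bound y) as [Hf1 Hf2]; fold f in Hf1, Hf2.
  assert (Hf : IZR f < y) by (destruct Hf1 as [| E]; [| exfalso; apply (Hy f)]; auto).
  exists (Rmin (y - IZR f) (IZR f + 1 - y)); split; [apply Rmin_case; lra |].
  intro z.
  pose proof (Rmin_l (y - IZR f) (IZR f + 1 - y)).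
  pose proof (Rmin_r (y - IZR f) (IZR f + 1 - y)).
  destruct (Z_le_gt_dec z f) as [Hz | Hz].
  - apply IZR_le in Hz; rewrite Rabs_pos_eq; lra.
  - assert (Hz' : (f + 1 <= z)%Z) by lia.
    apply IZR_le in Hz'; rewrite plus_IZR in Hz'.
    rewrite Rabs_minus_sym, Rabs_pos_eq; lra.
Qed.

Lemma relative_error_bound (y D eta : R) :
  0 <= eta <= 1 / 2 -> Rabs (y - D) <= eta * Rabs D + eta ->
  Rabs (y - D) <= eta * (2 * Rabs y + 2).
Proof.
  intros Heta Hyd.
  assert (HD : Rabs D <= Rabs y + Rabs (y - D)).
  { rewrite Rabs_minus_sym.
    replace D with (y + (D - y)) at 1 by ring; apply Rabs_triang. }
  assert (Hhalf : eta * Rabs D <= 1 / 2 * Rabs D).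
  { apply Rmult_le_compat_r; [apply Rabs_pos | lra]. }
  assert (HDy : eta * Rabs D <= eta * (2 * Rabs y + 1)).
  { apply Rmult_le_compat_l; lra. }
  lra.
Qed.

Section Increments.

Variables (g : nat -> R) (K : nat) (eta : R).
Hypothesis Hstep : forall k, (K <= k)%nat -> Rabs (g (S k) - g k) <= eta.

Lemma increments_telescope (a j : nat) :
  (K <= a)%nat -> Rabs (g (a + j)%nat - g a) <= eta * INR j.
Proof.
  intros Ha; induction j as [| j IH].
  - rewrite Nat.add_0_r, Rminus_diag, Rabs_R0; simpl; lra.
  - rewrite Nat.add_succ_r, S_INR.
    pose proof (Rabs_triang (g (S (a + j)) - g (a + j)%nat) (g (a + j)%nat - g a)).
    pose proof (Hstep (a + j)%nat ltac:(lia)).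
    replace (g (S (a + j)) - g (a + j)%nat + (g (a + j)%nat - g a))
      with (g (S (a + j)) - g a) in * by ring.
    lra.
Qed.

Lemma increments_dist_bound (m n : nat) :
  (K <= m)%nat -> (K <= n)%nat -> Rabs (g m - g n) <= eta * Rabs (INR m - INR n).
Proof.
  assert (Hord : forall m n, (K <= n <= m)%nat ->
            Rabs (g m - g n) <= eta * Rabs (INR m - INR n)).
  { intros m' n' Hmn.
    replace m' with (n' + (m' - n'))%nat at 1 by lia.
    rewrite <- minus_INR by lia.
    rewrite (Rabs_pos_eq (INR _)) by apply pos_INR.
    apply increments_telescope; lia. }
  intros Hm Hn; destruct (Nat.le_ge_cases n m).
  - apply Hord; lia.
  - rewrite Rabs_minus_sym, (Rabs_minus_sym (INR m)); apply Hord; lia.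
Qed.

End Increments.

Lemma finite_prefix_bounded (h : nat -> R) (K : nat) :
  exists B, forall m, (m < K)%nat -> h m <= B.
Proof.
  induction K as [| K [B HB]].
  - exists 0; intros; lia.
  - exists (Rmax B (h K)); intros m Hm.
    destruct (Nat.eq_dec m K) as [-> | Hne]; [apply Rmax_r |].
    eapply Rle_trans; [apply HB; lia | apply Rmax_l].
Qed.

Lemma finitely_many_near_integer_hits (g p q : nat -> R) (y : R) :
  (forall z : Z, y <> IZR z) ->
  Un_cv (fun k => g (S k) - g k) 0 ->
  Un_cv (fun k => p k - g k) 0 ->
  Un_cv (fun k => q k - g k) 0 ->
  exists N, forall n m : nat,
    INR m + p m <= INR n + y + g n < INR m + q m -> (n < N)%nat.
Proof.
  intros Hy Hg Hp Hq.
  destruct (noninteger_dist_Z_pos y Hy) as [d [Hd Hdist]].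
  assert (Hy3 : 0 < 2 * Rabs y + 3) by (pose proof (Rabs_pos y); lra).
  set (eta := Rmin (1 / 2) (d / (2 * Rabs y + 3))).
  assert (Heta : 0 < eta) by (apply Rmin_case; [lra | apply Rdiv_lt_0_compat; lra]).
  assert (Heta_half : eta <= 1 / 2) by apply Rmin_l.
  assert (Heta_d : eta * (2 * Rabs y + 2) < d).
  { assert (eta * (2 * Rabs y + 3) <= d).
    { apply Rle_trans with (d / (2 * Rabs y + 3) * (2 * Rabs y + 3)).
      - apply Rmult_le_compat_r; [lra | apply Rmin_r].
      - right; field; lra. }
    lra. }
  destruct (Un_cv_0_eventually _ eta Hg Heta) as [K1 HK1].
  destruct (Un_cv_0_eventually _ eta Hp Heta) as [K2 HK2].
  destruct (Un_cv_0_eventually _ eta Hq Heta) as [K3 HK3].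
  set (K := Nat.max K1 (Nat.max K2 K3)).
  assert (Hlip : forall m n, (K <= m)%nat -> (K <= n)%nat ->
            Rabs (g m - g n) <= eta * Rabs (INR m - INR n)).
  { apply increments_dist_bound; intros k Hk; left; apply HK1; lia. }
  destruct (finite_prefix_bounded (fun m => INR m + q m) K) as [B HB].
  destruct (INR_archimed 1 (2 * Rabs (B - y - g K)) Rlt_0_1) as [N0 HN0].
  exists (Nat.max K N0); intros n m [Hlow Hhigh].
  destruct (Nat.lt_ge_cases n (Nat.max K N0)) as [| HnN]; [assumption | exfalso].
  assert (HnK : INR K <= INR n) by (apply le_INR; lia).
  assert (HnN0 : INR N0 <= INR n) by (apply le_INR; lia).
  destruct (Nat.lt_ge_cases m K) as [HmK | HmK].
  - pose proof (HB m HmK) as HBm; simpl in HBm.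
    pose proof (Hlip n K ltac:(lia) (le_n K)) as HgnK.
    rewrite (Rabs_pos_eq (INR n - INR K)) in HgnK by lra.
    apply Rabs_le_between in HgnK.
    assert (eta * (INR n - INR K) <= 1 / 2 * (INR n - INR K))
      by (apply Rmult_le_compat_r; lra).
    pose proof (Rle_abs (B - y - g K)); pose proof (pos_INR K).
    lra.
  - pose proof (Hdist (Z.of_nat m - Z.of_nat n)%Z) as Hdmn.
    rewrite minus_IZR, <- !INR_IZR_INZ in Hdmn.
    pose proof (HK2 m ltac:(lia)) as Hpm; pose proof (HK3 m ltac:(lia)) as Hqm.
    pose proof (Hlip m n HmK ltac:(lia)) as Hgmn.
    apply Rabs_def2 in Hpm; apply Rabs_def2 in Hqm; apply Rabs_le_between in Hgmn.
    assert (Hnear : Rabs (y - (INR m - INR n)) <= eta * Rabs (INR m - INR n) + eta)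
      by (apply Rabs_le; lra).
    apply relative_error_bound in Hnear; lra.
Qed.

Theorem lemmaA4 (L : R -> R) (beta b1 b2 b3 x0 : R)
  (HL : slowly_varying L) (Hbeta : 0 < beta)
  (Hb1 : 0 < b1) (Hb2 : 0 < b2) (Hb3 : 0 < b3) (Hb23 : b3 < b2)
  (Hx0 : 0 < x0)
  (Hx0r : forall r : Z, x0 <> exp (2 * beta * (IZR r + 1 - b1))) :
  exists N : nat, forall n : nat,
    (exists m : nat, (0 < m)%nat /\
       INR m - b1 + / (2 * beta) * ln (L (exp (2 * INR m - b2)))
         <= / (2 * beta) * ln (A_kn beta L n * x0) /\
       / (2 * beta) * ln (A_kn beta L n * x0)
         < INR m - b1 + / (2 * beta) * ln (L (exp (2 * INR m - b3)))) ->
    (n < N)%nat.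
Proof.
  set (G := fun t => / (2 * beta) * ln (L (exp t))).
  set (y := / (2 * beta) * ln x0 + b1 - 1).
  assert (HA : forall n, / (2 * beta) * ln (A_kn beta L n * x0)
                         = INR n + y - b1 + G (2 * INR n - 2)).
  { intro n; destruct HL as [Hpos _]; unfold A_kn, G, y.
    assert (0 < L (exp (2 * INR n - 2))) by apply Hpos, exp_pos.
    rewrite !ln_mult, ln_exp; auto using exp_pos, Rmult_lt_0_compat.
    field; lra. }
  assert (Hy : forall z : Z, y <> IZR z).
  { intros z Hz; apply (Hx0r z).
    rewrite <- (exp_ln x0) by assumption; f_equal; unfold y in Hz.
    replace (IZR z) with (/ (2 * beta) * ln x0 + b1 - 1) by assumption.
    field; lra. }
  destruct (finitely_many_near_integer_hits (fun k => G (2 * INR k - 2))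
              (fun k => G (2 * INR k - b2)) (fun k => G (2 * INR k - b3)) y Hy)
    as [N HN].
  - apply Un_cv_ext with (2 := slowly_varying_ln_even_shift_cv L (/ (2 * beta)) 0 HL).
    intro k; unfold G; rewrite S_INR.
    replace (2 * (INR k + 1) - 2) with (2 * INR k - 0) by ring; reflexivity.
  - exact (slowly_varying_ln_even_shift_cv L _ b2 HL).
  - exact (slowly_varying_ln_even_shift_cv L _ b3 HL).
  - exists N; intros n [m [_ [Hlow Hhigh]]].
    apply (HN n m); rewrite HA in Hlow, Hhigh; unfold G in *; lra.
Qed.
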